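(* Let $X$ be a metric space of bounded geometry, $1\le p<\infty$, and let $\mathfrak U$ be a cover of $X$ with finite multiplicity $m(\mathfrak U)$, finite mesh $S(\mathfrak U)$, positive Lebesgue number $L(\mathfrak U)$, and such that no member of $\mathfrak U$ equals $X$. Then there exists a map $\xi\colon X\to\ell^p_1(X)$ with $S(\xi)=S(\mathfrak U)$ which is $\dfrac{2\,(2m(\mathfrak U)^2)^{1/p}}{L(\mathfrak U)}$-Lipschitz.
   Context: A metric space has bounded geometry if for every $R\ge0$ there is $C<\infty$ such that every ball of radius $R$ contains at most $C$ points. For a cover $\mathfrak U$ of $X$: $L(\mathfrak U,x)=\sup_{U\in\mathfrak U}\sup\{r: B_r(x)\subset U\}$, $L(\mathfrak U)=\inf_x L(\mathfrak U,x)$, $m(\mathfrak U)=\max_x\#\{U\in\mathfrak U:x\in U\}$, $S(\mathfrak U)=\sup_{U\in\mathfrak U}\operatorname{diam}U$. $\ell^p(X)$ is the space of $p$-summable real functions on $X$, $\ell^p_1(X)$ its unit sphere; for $\xi\colon X\to\ell^p(X)$, $x\mapsto\xi_x$, $S(\xi)=\sup\{d(x,y):\xi_x(y)\ne0\}$. *)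

From Stdlib Require Import Reals List.
Open Scope R_scope.

Definition is_metric {X : Type} (d : X -> X -> R) : Prop :=
  (forall x y, 0 <= d x y) /\
  (forall x y, d x y = 0 <-> x = y) /\
  (forall x y, d x y = d y x) /\
  (forall x y z, d x z <= d x y + d y z).

Definition ball {X : Type} (d : X -> X -> R) (x : X) (r : R) : X -> Prop :=
  fun y => d x y < r.

Definition bounded_geometry {X : Type} (d : X -> X -> R) : Prop :=
  forall Rad, 0 <= Rad -> exists C : nat, forall (x : X) (l : list X),
    NoDup l -> (forall y, In y l -> ball d x Rad y) -> (length l <= C)%nat.

Definition is_glb (E : R -> Prop) (l : R) : Prop :=
  (forall x, E x -> l <= x) /\ (forall b, (forall x, E x -> b <= x) -> b <= l).

Definition is_cover {X : Type} (U : (X -> Prop) -> Prop) : Prop :=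
  forall x, exists V, U V /\ V x.

Definition ext_distinct {X : Type} (l : list (X -> Prop)) : Prop :=
  ForallOrdPairs (fun V W => ~ (forall z, V z <-> W z)) l.

Definition members_at {X : Type} (U : (X -> Prop) -> Prop) (x : X)
  (l : list (X -> Prop)) : Prop :=
  ext_distinct l /\ forall V, In V l -> U V /\ V x.

(* m(U) = max_x #{V in U : x in V} (finite, given by the natural number m). *)
Definition multiplicity {X : Type} (U : (X -> Prop) -> Prop) (m : nat) : Prop :=
  (forall x l, members_at U x l -> (length l <= m)%nat) /\
  (exists x l, members_at U x l /\ length l = m).

(* S(U) = sup_{V in U} diam V = sup { d x y | x, y in a common member }. *)
Definition mesh {X : Type} (d : X -> X -> R) (U : (X -> Prop) -> Prop) (S : R) : Prop :=
  is_lub (fun r => exists V x y, U V /\ V x /\ V y /\ r = d x y) S.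

(* L(U,x) = sup_{V in U} sup { r | B_r(x) subset V } *)
Definition lebesgue_at {X : Type} (d : X -> X -> R) (U : (X -> Prop) -> Prop)
  (x : X) (v : R) : Prop :=
  is_lub (fun r => exists V, U V /\ forall y, ball d x r y -> V y) v.

Definition lebesgue_number {X : Type} (d : X -> X -> R) (U : (X -> Prop) -> Prop)
  (L : R) : Prop :=
  is_glb (fun v => exists x, lebesgue_at d U x v) L.

(* real power a^p for a >= 0, with 0^p = 0 *)
Definition pw (a p : R) : R := if Req_EM_T a 0 then 0 else Rpower a p.

Definition lp_sums {X : Type} (p : R) (f : X -> R) : R -> Prop :=
  fun r => exists l : list X, NoDup l /\
    r = fold_right (fun y acc => pw (Rabs (f y)) p + acc) 0 l.

Definition is_lp_norm {X : Type} (p : R) (f : X -> R) (v : R) : Prop :=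
  exists s, is_lub (lp_sums p f) s /\ v = pw s (/ p).

Definition into_unit_sphere {X : Type} (p : R) (xi : X -> X -> R) : Prop :=
  forall x, is_lp_norm p (xi x) 1.

Definition xi_support_size {X : Type} (d : X -> X -> R) (xi : X -> X -> R) (S : R) : Prop :=
  is_lub (fun r => exists x y, xi x y <> 0 /\ r = d x y) S.

Definition lp_lipschitz {X : Type} (d : X -> X -> R) (p K : R) (xi : X -> X -> R) : Prop :=
  forall x y, exists v, is_lp_norm p (fun z => xi x z - xi y z) v /\ v <= K * d x y.

From Stdlib Require Import Reals List Lra Lia Classical ClassicalEpsilon
  FunctionalExtensionality PropExtensionality.
From mathcomp Require ssreflect ssrbool eqtype ssralg ssrnum interval interval_inference.
From mathcomp Require classical_sets convex exp hoelder Rstruct_topology.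

(* For each member W of the cover let psi_W(x) be the distance from x to the
   complement of W: it is 1-Lipschitz, vanishes off W, and max_W psi_W(x) >= L(U).
   By bounded geometry every member is finite, so it has a pair (a_W, c_W)
   realising its diameter.  Set h_x(z) = (sum_{W ∋ x, c_W = z} psi_W(x)^p)^(1/p)
   and xi_x = h_x / |h_x|_p.  Then |h_x|_p^p = sum_{W ∋ x} psi_W(x)^p >= L(U)^p,
   and since at most 2m members contain x or y, |h_x - h_y|_p <= (2m)^(1/p) d(x,y);
   normalising costs a factor 2 / L(U).  Finally xi_x(z) <> 0 forces x and z into a
   common member, while xi_{a_W}(c_W) > 0 because points are isolated, so
   S(xi) = S(U). *)

Module PowerConvexity.
Import ssreflect ssrbool eqtype ssralg ssrnum interval interval_inference.
Import classical_sets convex exp hoelder Rstruct_topology.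
Local Open Scope R_scope.

Lemma pw_powR (a p : R) : 0 <= a -> p <> 0 -> pw a p = powR a p.
Proof.
move=> a0 p0; rewrite /pw /powR.
destruct (Req_dec_T a 0) as [->|an0].
  by rewrite eqxx; case: eqP.
have -> : (a == 0) = false by apply/eqP.
by rewrite /Rpower RexpE RlnE.
Qed.

Lemma pw_convex (p u v t : R) : 1 <= p -> 0 <= u -> 0 <= v -> 0 <= t -> t <= 1 ->
  pw (t * u + (1 - t) * v) p <= t * pw u p + (1 - t) * pw v p.
Proof.
move=> p1 u0 v0 t0 t1.
have p0 : p <> 0 by move=> h; rewrite h in p1; lra.
rewrite !pw_powR //; last by nra.
apply/RleP.
have := @convex_powR _ p (introT RleP p1) (@Itv01 _ t (introT RleP t0) (introT RleP t1)) u v.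
rewrite /= !inE /= !in_itv /= !andbT.
by move=> /(_ (introT RleP u0) (introT RleP v0)); rewrite convRE.
Qed.
End PowerConvexity.

Open Scope R_scope.

Lemma pw_0 q : pw 0 q = 0.
Proof. unfold pw; destruct (Req_EM_T 0 0); [reflexivity|congruence]. Qed.

Lemma pw_pos a q : 0 < a -> pw a q = Rpower a q.
Proof. intro Ha; unfold pw; destruct (Req_EM_T a 0); [lra|reflexivity]. Qed.

Lemma pw_gt0 a q : 0 < a -> 0 < pw a q.
Proof. intro Ha; rewrite pw_pos by lra; apply exp_pos. Qed.

Lemma pw_ge0 a q : 0 <= pw a q.
Proof. unfold pw; destruct (Req_EM_T a 0); [lra|left; apply exp_pos]. Qed.

Lemma pw_le a b q : 0 <= q -> 0 <= a -> a <= b -> pw a q <= pw b q.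
Proof.
  intros Hq Ha Hab. destruct (Req_EM_T a 0) as [->|Ha0].
  - rewrite pw_0; apply pw_ge0.
  - rewrite !pw_pos by lra. apply Rle_Rpower_l; lra.
Qed.

Lemma pw_pw_inv a q : 0 <= a -> q <> 0 -> pw (pw a q) (/ q) = a.
Proof.
  intros Ha Hq. destruct (Req_EM_T a 0) as [->|Ha0]; [rewrite !pw_0; reflexivity|].
  rewrite (pw_pos a), pw_pos by (try apply exp_pos; lra).
  rewrite Rpower_mult, Rinv_r by exact Hq. apply Rpower_1; lra.
Qed.

Lemma pw_mul a b q : 0 <= a -> 0 <= b -> pw (a * b) q = pw a q * pw b q.
Proof.
  intros Ha Hb. destruct (Req_EM_T a 0) as [->|Ha0]; [rewrite Rmult_0_l, !pw_0; ring|].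
  destruct (Req_EM_T b 0) as [->|Hb0]; [rewrite Rmult_0_r, !pw_0; ring|].
  rewrite !pw_pos by nra. symmetry; apply Rpower_mult_distr; lra.
Qed.

Lemma pw_Rinv a q : 0 < a -> pw (/ a) q = / pw a q.
Proof.
  intro Ha. rewrite !pw_pos by (try apply Rinv_0_lt_compat; lra).
  unfold Rpower. rewrite ln_Rinv, <- exp_Ropp by lra. f_equal; ring.
Qed.

(* [lp_sums] is stated with exactly this fold. *)
Definition lsum {A : Type} (g : A -> R) (l : list A) : R :=
  fold_right (fun a acc => g a + acc) 0 l.

Section ListSums.
Context {A : Type}.
Implicit Types (g h : A -> R) (l : list A).

Lemma lsum_nil g : lsum g nil = 0.
Proof. reflexivity. Qed.

Lemma lsum_cons g a l : lsum g (a :: l) = g a + lsum g l.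
Proof. reflexivity. Qed.

Lemma lsum_app g l1 l2 : lsum g (l1 ++ l2) = lsum g l1 + lsum g l2.
Proof.
  induction l1 as [|a l1 IH]; [rewrite lsum_nil; simpl; ring|].
  rewrite <- app_comm_cons, !lsum_cons, IH; ring.
Qed.

Lemma lsum_ext g h l : (forall a, In a l -> g a = h a) -> lsum g l = lsum h l.
Proof.
  induction l as [|a l IH]; intro H; [reflexivity|]. rewrite !lsum_cons.
  rewrite H by (left; auto). f_equal. apply IH; intros; apply H; right; auto.
Qed.

Lemma lsum_le g h l : (forall a, In a l -> g a <= h a) -> lsum g l <= lsum h l.
Proof.
  induction l as [|a l IH]; intro H; [rewrite !lsum_nil; lra|]. rewrite !lsum_cons.
  apply Rplus_le_compat; [apply H; left; auto|apply IH; intros; apply H; right; auto].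
Qed.

Lemma lsum_ge0 g l : (forall a, In a l -> 0 <= g a) -> 0 <= lsum g l.
Proof.
  induction l as [|a l IH]; intro H; [rewrite lsum_nil; lra|]. rewrite lsum_cons.
  apply Rplus_le_le_0_compat; [apply H; left; auto|apply IH; intros; apply H; right; auto].
Qed.

Lemma lsum_plus g h l : lsum (fun a => g a + h a) l = lsum g l + lsum h l.
Proof. induction l as [|a l IH]; [rewrite !lsum_nil; ring|]. rewrite !lsum_cons, IH; ring. Qed.

Lemma lsum_mull k g l : lsum (fun a => k * g a) l = k * lsum g l.
Proof. induction l as [|a l IH]; [rewrite !lsum_nil; ring|]. rewrite !lsum_cons, IH; ring. Qed.

Lemma lsum_le_const g k l : (forall a, In a l -> g a <= k) -> lsum g l <= INR (length l) * k.
Proof.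
  induction l as [|a l IH]; intro H; [rewrite lsum_nil; simpl; lra|].
  rewrite lsum_cons; cbn [length]; rewrite S_INR.
  assert (g a <= k) by (apply H; left; auto).
  assert (lsum g l <= INR (length l) * k) by (apply IH; intros; apply H; right; auto). lra.
Qed.

Lemma lsum_ge_term g l a : (forall b, In b l -> 0 <= g b) -> In a l -> g a <= lsum g l.
Proof.
  intros H Ha. induction l as [|b l IH]; [destruct Ha|]. rewrite lsum_cons.
  assert (0 <= g b) by (apply H; left; auto).
  assert (0 <= lsum g l) by (apply lsum_ge0; intros; apply H; right; auto).
  destruct Ha as [<-|Ha]; [lra|].
  assert (g a <= lsum g l) by (apply IH; auto; intros; apply H; right; auto). lra.
Qed.

Lemma lsum_le_supp g l1 l2 : (forall a, 0 <= g a) -> NoDup l1 -> NoDup l2 ->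
  (forall a, In a l1 -> g a <> 0 -> In a l2) -> lsum g l1 <= lsum g l2.
Proof.
  intros Hg. revert l2. induction l1 as [|a l1 IH]; intros l2 H1 H2 Hin.
  { apply lsum_ge0; auto. }
  inversion H1 as [|? ? Ha H1']; subst. rewrite lsum_cons.
  destruct (Req_EM_T (g a) 0) as [E|E].
  { rewrite E, Rplus_0_l. apply IH; auto. intros; apply Hin; auto; right; auto. }
  destruct (in_split a l2) as (Z1 & Z2 & ->); [apply Hin; auto; left; auto|].
  assert (lsum g l1 <= lsum g (Z1 ++ Z2)).
  { apply IH; auto; [apply NoDup_remove_1 with a; auto|].
    intros b Hb Hgb. assert (Hb' : In b (Z1 ++ a :: Z2)) by (apply Hin; auto; right; auto).
    apply in_app_or in Hb'; apply in_or_app.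
    destruct Hb' as [?|[->|?]]; auto; contradiction. }
  rewrite lsum_app, lsum_cons in *; lra.
Qed.

End ListSums.

Section LpNorm.
Variable p : R.
Hypothesis Hp : 1 <= p.

Definition apow (t : R) : R := pw (Rabs t) p.

Definition lpnorm {A : Type} (l : list A) (f : A -> R) : R :=
  pw (lsum (fun a => apow (f a)) l) (/ p).

Let inv_p_ge0 : 0 <= / p.
Proof. left; apply Rinv_0_lt_compat; lra. Qed.

Lemma apow_ge0 t : 0 <= apow t.
Proof. apply pw_ge0. Qed.

Lemma apow_0 : apow 0 = 0.
Proof. unfold apow; rewrite Rabs_R0; apply pw_0. Qed.

Lemma apow_le s t : Rabs s <= Rabs t -> apow s <= apow t.
Proof. intro H; apply pw_le; [lra|apply Rabs_pos|exact H]. Qed.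

Lemma apow_nonneg t : 0 <= t -> apow t = pw t p.
Proof. intro H; unfold apow; rewrite Rabs_right by lra; reflexivity. Qed.

Lemma apow_root s : 0 <= s -> apow (pw s (/ p)) = s.
Proof.
  intro Hs. rewrite apow_nonneg by apply pw_ge0.
  rewrite <- (Rinv_inv p) at 2. apply pw_pw_inv; [exact Hs|].
  apply Rinv_neq_0_compat; lra.
Qed.

Lemma root_apow t : pw (apow t) (/ p) = Rabs t.
Proof. apply pw_pw_inv; [apply Rabs_pos|lra]. Qed.

Lemma lpnorm_ge0 {A} (l : list A) f : 0 <= lpnorm l f.
Proof. apply pw_ge0. Qed.

Lemma apow_lpnorm {A} (l : list A) f : apow (lpnorm l f) = lsum (fun a => apow (f a)) l.
Proof. apply apow_root, lsum_ge0; intros; apply apow_ge0. Qed.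

Lemma lpnorm_ext {A} (l : list A) f g :
  (forall a, In a l -> f a = g a) -> lpnorm l f = lpnorm l g.
Proof. intro H; unfold lpnorm; f_equal; apply lsum_ext; intros a Ha; rewrite H; auto. Qed.

Lemma lpnorm_le_sum {A} (l : list A) f s :
  lsum (fun a => apow (f a)) l <= s -> lpnorm l f <= pw s (/ p).
Proof. intro H; apply pw_le; auto. apply lsum_ge0; intros; apply apow_ge0. Qed.

Lemma lpnorm_ge_abs {A} (l : list A) f a : In a l -> Rabs (f a) <= lpnorm l f.
Proof.
  intro Ha. rewrite <- root_apow. apply pw_le; auto; [apply apow_ge0|].
  apply lsum_ge_term with (g := fun a => apow (f a)); auto. intros; apply apow_ge0.
Qed.

Lemma apow_add_le (A B s t : R) : 0 < A -> 0 < B ->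
  apow (s + t) <= pw (A + B) p *
    (A / (A + B) * (apow s / pw A p) + B / (A + B) * (apow t / pw B p)).
Proof.
  intros HA HB.
  set (u := Rabs s / A). set (v := Rabs t / B). set (lam := A / (A + B)).
  assert (Hu : 0 <= u) by (apply Rmult_le_pos; [apply Rabs_pos|left; apply Rinv_0_lt_compat; lra]).
  assert (Hv : 0 <= v) by (apply Rmult_le_pos; [apply Rabs_pos|left; apply Rinv_0_lt_compat; lra]).
  assert (Hlam : 0 <= lam <= 1).
  { unfold lam; split; [apply Rmult_le_pos; [lra|left; apply Rinv_0_lt_compat; lra]|].
    apply Rmult_le_reg_r with (A + B); [lra|]. unfold Rdiv; rewrite Rmult_assoc, Rinv_l; lra. }
  assert (Hsplit : Rabs s + Rabs t = (A + B) * (lam * u + (1 - lam) * v)).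
  { unfold u, v, lam; field; lra. }
  assert (Hpow : forall w C, 0 < C -> pw (Rabs w / C) p = apow w / pw C p).
  { intros w C HC. unfold Rdiv. rewrite pw_mul, pw_Rinv by (try apply Rabs_pos; try left;
      try apply Rinv_0_lt_compat; lra). reflexivity. }
  apply Rle_trans with (pw (Rabs s + Rabs t) p); [apply pw_le; [lra|apply Rabs_pos|apply Rabs_triang]|].
  rewrite Hsplit, pw_mul by (try apply Rplus_le_le_0_compat; try apply Rmult_le_pos; lra).
  apply Rmult_le_compat_l; [apply pw_ge0|].
  replace (B / (A + B)) with (1 - lam) by (unfold lam; field; lra).
  rewrite <- (Hpow s A HA), <- (Hpow t B HB). fold u v.
  apply PowerConvexity.pw_convex; lra.
Qed.

Lemma lpnorm_triangle {A} (l : list A) f g :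
  lpnorm l (fun a => f a + g a) <= lpnorm l f + lpnorm l g.
Proof.
  set (Nf := lpnorm l f). set (Ng := lpnorm l g).
  assert (Hf : 0 <= Nf) by apply lpnorm_ge0. assert (Hg : 0 <= Ng) by apply lpnorm_ge0.
  assert (Hvanish : forall h, lpnorm l h = 0 -> forall a, In a l -> h a = 0).
  { intros h Hh a Ha. pose proof (lpnorm_ge_abs l h a Ha).
    destruct (Req_EM_T (h a) 0) as [E|E]; [exact E|]. pose proof (Rabs_pos_lt _ E); lra. }
  destruct (Req_EM_T Nf 0) as [Hf0|Hf0].
  { rewrite (lpnorm_ext l _ g); [fold Ng; lra|]. intros a Ha; rewrite (Hvanish f Hf0 a Ha); ring. }
  destruct (Req_EM_T Ng 0) as [Hg0|Hg0].
  { rewrite (lpnorm_ext l _ f); [fold Nf; lra|]. intros a Ha; rewrite (Hvanish g Hg0 a Ha); ring. }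
  assert (HSf : lsum (fun a => apow (f a)) l = pw Nf p) by (rewrite <- apow_lpnorm; apply apow_nonneg; lra).
  assert (HSg : lsum (fun a => apow (g a)) l = pw Ng p) by (rewrite <- apow_lpnorm; apply apow_nonneg; lra).
  assert (HNf : 0 < pw Nf p) by (apply pw_gt0; lra).
  assert (HNg : 0 < pw Ng p) by (apply pw_gt0; lra).
  rewrite <- (pw_pw_inv (Nf + Ng) p) by lra.
  apply lpnorm_le_sum.
  eapply Rle_trans; [apply lsum_le; intros a _; apply (apow_add_le Nf Ng); lra|].
  rewrite lsum_mull, lsum_plus, !lsum_mull.
  rewrite (lsum_ext (fun a => apow (f a) / pw Nf p) (fun a => / pw Nf p * apow (f a))),
    (lsum_ext (fun a => apow (g a) / pw Ng p) (fun a => / pw Ng p * apow (g a)))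
    by (intros; unfold Rdiv; ring).
  rewrite !lsum_mull, HSf, HSg. right; field; lra.
Qed.

Lemma lpnorm_scale {A} (l : list A) k f : lpnorm l (fun a => k * f a) = Rabs k * lpnorm l f.
Proof.
  unfold lpnorm.
  rewrite (lsum_ext _ (fun a => apow k * apow (f a))) by
    (intros a _; unfold apow; rewrite Rabs_mult; apply pw_mul; apply Rabs_pos).
  rewrite lsum_mull, pw_mul by (try apply apow_ge0; apply lsum_ge0; intros; apply apow_ge0).
  rewrite root_apow; reflexivity.
Qed.

Lemma lpnorm_sub_sym {A} (l : list A) f g :
  lpnorm l (fun a => f a - g a) = lpnorm l (fun a => g a - f a).
Proof.
  rewrite <- (Rmult_1_l (lpnorm l (fun a => g a - f a))), <- Rabs_R1, <- Rabs_Ropp, <- lpnorm_scale.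
  apply lpnorm_ext; intros; ring.
Qed.

Lemma lpnorm_rev_triangle {A} (l : list A) f g :
  Rabs (lpnorm l f - lpnorm l g) <= lpnorm l (fun a => f a - g a).
Proof.
  assert (Hf : lpnorm l f <= lpnorm l g + lpnorm l (fun a => f a - g a)).
  { rewrite <- (lpnorm_ext l (fun a => g a + (f a - g a)) f) by (intros; ring).
    apply lpnorm_triangle. }
  assert (Hg : lpnorm l g <= lpnorm l f + lpnorm l (fun a => f a - g a)).
  { rewrite <- (lpnorm_ext l (fun a => f a + (g a - f a)) g) by (intros; ring).
    rewrite (lpnorm_sub_sym l f g). apply lpnorm_triangle. }
  apply Rabs_le; lra.
Qed.

Lemma lpnorm_le_const {A} (l : list A) f k :
  (forall a, In a l -> Rabs (f a) <= k) -> lpnorm l f <= pw (INR (length l)) (/ p) * k.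
Proof.
  intro Hk. destruct l as [|a0 l'] eqn:El.
  { unfold lpnorm; rewrite lsum_nil; simpl; rewrite !pw_0; lra. }
  rewrite <- El in *.
  assert (k0 : 0 <= k).
  { pose proof (Hk a0 ltac:(rewrite El; left; reflexivity)). pose proof (Rabs_pos (f a0)); lra. }
  apply Rle_trans with (pw (INR (length l) * apow k) (/ p)).
  - apply lpnorm_le_sum, lsum_le_const. intros a Ha. apply apow_le. rewrite (Rabs_right k); auto; lra.
  - rewrite pw_mul, root_apow, Rabs_right by (lra || apply pos_INR || apply apow_ge0). lra.
Qed.

Lemma lpnorm_normalize_diff {A} (l : list A) f g L : 0 < L ->
  L <= lpnorm l f -> L <= lpnorm l g ->
  lpnorm l (fun a => f a / lpnorm l f - g a / lpnorm l g) <= 2 * lpnorm l (fun a => f a - g a) / L.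
Proof.
  intros HL Hf Hg.
  assert (Hwlog : forall f g, L <= lpnorm l g -> lpnorm l g <= lpnorm l f ->
    lpnorm l (fun a => f a / lpnorm l f - g a / lpnorm l g) <= 2 * lpnorm l (fun a => f a - g a) / L).
  { clear f g Hf Hg. intros f g HLg Hgf.
    set (Nf := lpnorm l f) in *. set (Ng := lpnorm l g) in *.
    set (D := lpnorm l (fun a => f a - g a)).
    assert (HD : Nf - Ng <= D) by (eapply Rle_trans; [apply Rle_abs|apply lpnorm_rev_triangle]).
    assert (HD0 : 0 <= D) by apply lpnorm_ge0.
    rewrite (lpnorm_ext l _ (fun a => / Nf * (f a - g a) + (/ Nf - / Ng) * g a)) by (intros; unfold Rdiv; ring).
    eapply Rle_trans; [apply lpnorm_triangle|].
    rewrite !lpnorm_scale. fold D Ng.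
    rewrite Rabs_right by (left; apply Rinv_0_lt_compat; lra).
    rewrite Rabs_left1 by (assert (/ Nf <= / Ng) by (apply Rinv_le_contravar; lra); lra).
    replace (/ Nf * D + - (/ Nf - / Ng) * Ng) with ((D + (Nf - Ng)) / Nf) by (field; lra).
    apply Rle_trans with (2 * D / Nf).
    - unfold Rdiv; apply Rmult_le_compat_r; [left; apply Rinv_0_lt_compat|]; lra.
    - unfold Rdiv; apply Rmult_le_compat_l; [lra|]; apply Rinv_le_contravar; lra. }
  destruct (Rle_dec (lpnorm l g) (lpnorm l f)) as [H|H]; [apply Hwlog; auto|].
  rewrite lpnorm_sub_sym, (lpnorm_sub_sym l f g). apply Hwlog; lra.
Qed.

Lemma is_lp_norm_lpnorm {X : Type} (Z : list X) f : NoDup Z ->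
  (forall z, f z <> 0 -> In z Z) -> is_lp_norm p f (lpnorm Z f).
Proof.
  intros HZ Hsupp. exists (lsum (fun z => apow (f z)) Z). split; [split|reflexivity].
  - intros r (l & Hl & ->). apply lsum_le_supp with (g := fun z => apow (f z)); auto.
    + intros; apply apow_ge0.
    + intros z _ Hz. apply Hsupp. intro E. apply Hz. rewrite E. apply apow_0.
  - intros b Hb. apply Hb. exists Z; split; auto.
Qed.

End LpNorm.

Section Fibers.
Variable p : R.
Hypothesis Hp : 1 <= p.
Variables (I Z : Type) (eqZ : forall z w : Z, {z = w} + {z <> w}) (c : I -> Z).

Definition fiber (G : list I) (z : Z) : list I :=
  filter (fun i => if eqZ (c i) z then true else false) G.

Lemma fiber_In G z i : In i (fiber G z) <-> In i G /\ c i = z.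
Proof. unfold fiber; rewrite filter_In. destruct (eqZ (c i) z); intuition congruence. Qed.

Lemma fiber_cons G z i :
  fiber (i :: G) z = if eqZ (c i) z then i :: fiber G z else fiber G z.
Proof. unfold fiber; simpl. destruct (eqZ (c i) z); reflexivity. Qed.

Lemma lsum_indicator (zs : list Z) w k : NoDup zs -> In w zs ->
  lsum (fun z => if eqZ w z then k else 0) zs = k.
Proof.
  induction zs as [|z zs IH]; intros Hnd Hw; [destruct Hw|].
  inversion Hnd as [|? ? Hz Hnd']; subst. rewrite lsum_cons.
  destruct (eqZ w z) as [<-|Hne].
  - rewrite (lsum_ext _ (fun _ => 0 * 0)), lsum_mull; [ring|].
    intros z Hz'. destruct (eqZ w z); [subst; contradiction|ring].
  - destruct Hw as [->|Hw]; [congruence|]. rewrite IH; auto; ring.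
Qed.

Lemma lsum_fibers (g : I -> R) G (zs : list Z) : NoDup zs ->
  (forall i, In i G -> In (c i) zs) -> lsum (fun z => lsum g (fiber G z)) zs = lsum g G.
Proof.
  intro Hnd. induction G as [|i G IH]; intro HG.
  { rewrite (lsum_ext _ (fun _ => 0 * 0)), lsum_mull, lsum_nil; [ring|].
    intros; unfold fiber; simpl; ring. }
  rewrite (lsum_ext _ (fun z => (if eqZ (c i) z then g i else 0) + lsum g (fiber G z))).
  - rewrite lsum_plus, lsum_indicator, IH, lsum_cons; auto.
    + intros j Hj; apply HG; right; auto.
    + apply HG; left; auto.
  - intros z _. rewrite fiber_cons. destruct (eqZ (c i) z); rewrite ?lsum_cons; ring.
Qed.

Lemma lpnorm_fibers a G zs : NoDup zs -> (forall i, In i G -> In (c i) zs) ->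
  lpnorm p zs (fun z => lpnorm p (fiber G z) a) = lpnorm p G a.
Proof.
  intros Hnd HG. unfold lpnorm at 1.
  rewrite (lsum_ext _ (fun z => lsum (fun i => apow p (a i)) (fiber G z)))
    by (intros; apply apow_lpnorm; exact Hp).
  rewrite lsum_fibers; auto.
Qed.

Lemma lpnorm_fibers_sub a b G zs : NoDup zs -> (forall i, In i G -> In (c i) zs) ->
  lpnorm p zs (fun z => lpnorm p (fiber G z) a - lpnorm p (fiber G z) b)
    <= lpnorm p G (fun i => a i - b i).
Proof.
  intros Hnd HG. apply lpnorm_le_sum; auto.
  rewrite <- (lsum_fibers _ G zs) by auto. apply lsum_le. intros z _.
  rewrite <- apow_lpnorm by exact Hp. apply apow_le; auto.
  rewrite (Rabs_right (lpnorm _ _ _)) by (apply Rle_ge, lpnorm_ge0).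
  apply lpnorm_rev_triangle; exact Hp.
Qed.

Lemma lpnorm_fiber_neq0 a G z : lpnorm p (fiber G z) a <> 0 -> exists i, In i G /\ c i = z.
Proof.
  destruct (fiber G z) as [|i l] eqn:E; intro H.
  - exfalso; apply H; unfold lpnorm; rewrite lsum_nil; apply pw_0.
  - exists i; apply fiber_In; rewrite E; left; reflexivity.
Qed.

End Fibers.

Arguments fiber {I Z} eqZ c G z.

Lemma lp_lipschitz_weaken {X : Type} (d : X -> X -> R) p K K' xi :
  (forall x y, 0 <= d x y) -> K <= K' -> lp_lipschitz d p K xi -> lp_lipschitz d p K' xi.
Proof.
  intros Hd HK Hxi x y. destruct (Hxi x y) as (v & Hv & Hle). exists v; split; auto.
  pose proof (Hd x y); nra.
Qed.

Section Embedding.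
Variables (X I : Type) (eqX : forall x y : X, {x = y} + {x <> y})
  (eqI : forall i j : I, {i = j} + {i <> j}).
Variables (d : X -> X -> R) (p L : R) (m : nat).
Variables (phi : I -> X -> R) (c : I -> X) (F : X -> list I).
Hypothesis d_ge0 : forall x y, 0 <= d x y.
Hypothesis d_sym : forall x y, d x y = d y x.
Hypothesis Hp : 1 <= p.
Hypothesis HL : 0 < L.
Hypothesis F_nodup : forall x, NoDup (F x).
Hypothesis F_length : forall x, (length (F x) <= m)%nat.
(* Only indices active somewhere are constrained: in the application I is all
   subsets of X and [phi] the distance to the complement, which is only
   controlled on cover members. *)
Hypothesis phi_lip : forall i x y, In i (F x) -> Rabs (phi i x - phi i y) <= d x y.
Hypothesis phi_inactive : forall i x y, In i (F y) -> ~ In i (F x) -> phi i x = 0.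
Hypothesis F_lebesgue : forall x b, (forall i, In i (F x) -> phi i x <= b) -> L <= b.

(* [weight x] is h_x of the sketch above and [embedding] is xi. *)
Definition weight (x z : X) : R := lpnorm p (fiber eqX c (F x) z) (fun i => phi i x).
Definition weight_norm (x : X) : R := lpnorm p (F x) (fun i => phi i x).
Definition embedding (x z : X) : R := weight x z / weight_norm x.
Definition apexes (G : list I) : list X := nodup eqX (map c G).

Lemma apexes_In G i : In i G -> In (c i) (apexes G).
Proof. intro H; apply nodup_In, in_map, H. Qed.

Lemma weight_norm_ge x : L <= weight_norm x.
Proof.
  apply (F_lebesgue x). intros i Hi.
  eapply Rle_trans; [apply Rle_abs|apply lpnorm_ge_abs with (f := fun i => phi i x); auto].
Qed.

Lemma embedding_neq0 x z : embedding x z <> 0 -> exists i, In i (F x) /\ c i = z.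
Proof.
  intro H. apply (lpnorm_fiber_neq0 p _ _ eqX c (fun i => phi i x)).
  intro E. apply H. unfold embedding, weight. rewrite E. unfold Rdiv; ring.
Qed.

Lemma embedding_apexes G x z : incl (F x) G -> embedding x z <> 0 -> In z (apexes G).
Proof. intros HG Hz. destruct (embedding_neq0 x z Hz) as (i & Hi & <-). apply apexes_In, HG, Hi. Qed.

Lemma lpnorm_weight G x : incl (F x) G -> lpnorm p (apexes G) (weight x) = weight_norm x.
Proof.
  intro HG. apply lpnorm_fibers; auto; [apply NoDup_nodup|].
  intros i Hi; apply apexes_In, HG, Hi.
Qed.

Lemma embedding_unit_sphere : into_unit_sphere p embedding.
Proof.
  intro x. pose proof (weight_norm_ge x) as Hx.
  replace 1 with (lpnorm p (apexes (F x)) (embedding x)).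
  { apply is_lp_norm_lpnorm; [apply NoDup_nodup|].
    intros z Hz; apply embedding_apexes with (x := x); auto; apply incl_refl. }
  rewrite (lpnorm_ext p _ _ (fun z => / weight_norm x * weight x z)) by (intros; unfold embedding, Rdiv; ring).
  rewrite lpnorm_scale, lpnorm_weight by (auto using incl_refl).
  rewrite Rabs_right by (left; apply Rinv_0_lt_compat; lra). field; lra.
Qed.

Lemma embedding_apex_neq0 i x : In i (F x) -> phi i x <> 0 -> embedding x (c i) <> 0.
Proof.
  intros Hi Hphi. unfold embedding. pose proof (weight_norm_ge x).
  assert (0 < weight x (c i)).
  { apply Rlt_le_trans with (Rabs (phi i x)); [apply Rabs_pos_lt; exact Hphi|].
    apply lpnorm_ge_abs with (f := fun i => phi i x); auto. apply fiber_In; auto. }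
  apply Rgt_not_eq. unfold Rdiv; apply Rmult_lt_0_compat; auto. apply Rinv_0_lt_compat; lra.
Qed.

Lemma weight_over G x z : NoDup G -> incl (F x) G -> (forall i, In i G -> exists y, In i (F y)) ->
  weight x z = lpnorm p (fiber eqX c G z) (fun i => phi i x).
Proof.
  intros HG HxG Hact. unfold weight, lpnorm. f_equal.
  apply Rle_antisym; apply lsum_le_supp; try (intros; apply apow_ge0); try apply NoDup_filter; auto.
  - intros i Hi _. apply fiber_In in Hi. apply fiber_In. split; [apply HxG|]; apply Hi.
  - intros i Hi Hne. apply fiber_In in Hi. apply fiber_In. split; [|apply Hi].
    destruct (in_dec eqI i (F x)) as [|Hout]; auto.
    destruct (Hact i (proj1 Hi)) as [y Hy].
    exfalso; apply Hne. rewrite (phi_inactive i x y) by assumption. apply apow_0.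
Qed.

Definition active_union (x y : X) : list I := nodup eqI (F x ++ F y).

Lemma active_union_In x y i : In i (active_union x y) <-> In i (F x) \/ In i (F y).
Proof. unfold active_union; rewrite nodup_In; apply in_app_iff. Qed.

Lemma active_union_length x y : (length (active_union x y) <= 2 * m)%nat.
Proof.
  eapply Nat.le_trans; [apply NoDup_incl_length; [apply NoDup_nodup|]|].
  - intros i Hi; apply nodup_In in Hi; exact Hi.
  - rewrite length_app. pose proof (F_length x); pose proof (F_length y); lia.
Qed.

Lemma weight_diff_le x y :
  lpnorm p (apexes (active_union x y)) (fun z => weight x z - weight y z)
    <= pw (INR (2 * m)) (/ p) * d x y.
Proof.
  set (G := active_union x y).
  assert (HG : NoDup G) by apply NoDup_nodup.
  assert (Hact : forall i, In i G -> exists w, In i (F w)).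
  { intros i Hi; apply active_union_In in Hi as [Hi|Hi]; eauto. }
  rewrite (lpnorm_ext p _ _ (fun z => lpnorm p (fiber eqX c G z) (fun i => phi i x)
                                     - lpnorm p (fiber eqX c G z) (fun i => phi i y))).
  2:{ intros z _. rewrite (weight_over G x), (weight_over G y); auto;
      intros i Hi; apply active_union_In; auto. }
  eapply Rle_trans; [apply lpnorm_fibers_sub; auto; [apply NoDup_nodup|apply apexes_In]|].
  eapply Rle_trans; [apply lpnorm_le_const; auto|].
  - intros i Hi. apply active_union_In in Hi as [Hi|Hi]; [apply phi_lip; auto|].
    rewrite Rabs_minus_sym, d_sym. apply phi_lip; auto.
  - apply Rmult_le_compat_r; [apply d_ge0|].
    apply pw_le; [left; apply Rinv_0_lt_compat; lra|apply pos_INR|].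
    apply le_INR, active_union_length.
Qed.

Lemma embedding_lipschitz : lp_lipschitz d p (2 * pw (INR (2 * m)) (/ p) / L) embedding.
Proof.
  intros x y. set (G := active_union x y).
  assert (HxG : incl (F x) G) by (intros i Hi; apply active_union_In; auto).
  assert (HyG : incl (F y) G) by (intros i Hi; apply active_union_In; auto).
  exists (lpnorm p (apexes G) (fun z => embedding x z - embedding y z)). split.
  { apply is_lp_norm_lpnorm; [apply NoDup_nodup|]. intros z Hz.
    destruct (Req_EM_T (embedding x z) 0) as [E|E].
    - apply embedding_apexes with (x := y); auto. intro E'; apply Hz; rewrite E, E'; ring.
    - apply embedding_apexes with (x := x); auto. }
  assert (HLx : L <= lpnorm p (apexes G) (weight x)) by (rewrite lpnorm_weight; auto using weight_norm_ge).
  assert (HLy : L <= lpnorm p (apexes G) (weight y)) by (rewrite lpnorm_weight; auto using weight_norm_ge).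
  unfold embedding. rewrite <- (lpnorm_weight G x), <- (lpnorm_weight G y) by auto.
  eapply Rle_trans; [apply (lpnorm_normalize_diff p Hp (apexes G) (weight x) (weight y) L); auto|].
  pose proof (weight_diff_le x y). fold G in H.
  apply Rle_trans with (2 * (pw (INR (2 * m)) (/ p) * d x y) / L); [|right; field; lra].
  unfold Rdiv; apply Rmult_le_compat_r; [left; apply Rinv_0_lt_compat|]; lra.
Qed.

End Embedding.

Lemma is_glb_exists (E : R -> Prop) : (exists r, E r) -> (exists b, forall r, E r -> b <= r) ->
  exists l, is_glb E l.
Proof.
  intros [r0 Hr0] [b Hb].
  destruct (completeness (fun r => E (- r))) as [M [HM1 HM2]].
  - exists (- b). intros r Hr. specialize (Hb _ Hr). lra.
  - exists (- r0). rewrite Ropp_involutive; exact Hr0.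
  - exists (- M). split.
    + intros r Hr. assert (- r <= M) by (apply HM1; rewrite Ropp_involutive; exact Hr). lra.
    + intros b' Hb'. assert (M <= - b') by (apply HM2; intros r Hr; specialize (Hb' _ Hr); lra). lra.
Qed.

Lemma finite_enum {A : Type} (Q : A -> Prop) (C : nat) :
  (forall l, NoDup l -> (forall a, In a l -> Q a) -> (length l <= C)%nat) ->
  exists l, NoDup l /\ forall a, In a l <-> Q a.
Proof.
  intro HC.
  assert (Grow : forall n l, (C - length l <= n)%nat -> NoDup l -> (forall a, In a l -> Q a) ->
    exists l', NoDup l' /\ forall a, In a l' <-> Q a).
  { induction n as [|n IH]; intros l Hn Hl HlQ;
      (destruct (classic (forall a, Q a -> In a l)) as [Hall|Hmiss];
       [exists l; split; [exact Hl|intro a; split; auto]|]);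
      apply not_all_ex_not in Hmiss as [a Ha]; apply imply_to_and in Ha as [Qa Ha];
      assert (Hlen : (length (a :: l) <= C)%nat) by (apply HC; [constructor; auto|intros b [<-|Hb]; auto]);
      simpl in Hlen.
    - lia.
    - apply (IH (a :: l)); [simpl; lia|constructor; auto|intros b [<-|Hb]; auto]. }
  apply (Grow C nil); [simpl; lia|constructor|intros a []].
Qed.

Lemma list_argmax {A : Type} (g : A -> R) (l : list A) a0 : In a0 l ->
  exists a, In a l /\ forall b, In b l -> g b <= g a.
Proof.
  revert a0. induction l as [|x l IH]; intros a0 H0; [destruct H0|].
  destruct l as [|y l'].
  - exists x; split; [left; auto|]. intros b [<-|[]]; lra.
  - destruct (IH y (or_introl eq_refl)) as (a & Ha & Hmax).
    destruct (Rle_dec (g x) (g a)).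
    + exists a; split; [right; auto|]. intros b [<-|Hb]; auto.
    + exists x; split; [left; auto|]. intros b [<-|Hb]; [lra|].
      specialize (Hmax b Hb); lra.
Qed.

Lemma list_pos_lower_bound {A : Type} (g : A -> R) (l : list A) :
  (forall a, In a l -> 0 < g a) -> exists e, 0 < e /\ forall a, In a l -> e <= g a.
Proof.
  induction l as [|a l IH]; intro H.
  - exists 1; split; [lra|intros _ []].
  - destruct IH as (e & He & Hle); [intros; apply H; right; auto|].
    exists (Rmin (g a) e). split; [apply Rmin_pos; auto; apply H; left; auto|].
    intros b [<-|Hb]; [apply Rmin_l|eapply Rle_trans; [apply Rmin_r|auto]].
Qed.

Lemma NoDup_ext_distinct {X : Type} (l : list (X -> Prop)) : NoDup l -> ext_distinct l.
Proof.
  unfold ext_distinct. induction l as [|V l IH]; intro H; constructor.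
  - inversion H as [|? ? HV Hl]; subst. apply Forall_forall. intros W HW Heq.
    apply HV. replace V with W; auto.
    apply functional_extensionality; intro z; apply propositional_extensionality; symmetry; apply Heq.
  - inversion H; subst; auto.
Qed.

Definition classical_eq_dec {A : Type} (a b : A) : {a = b} + {a <> b} :=
  excluded_middle_informative (a = b).

Section Metric.
Variables (X : Type) (d : X -> X -> R).
Hypothesis Hd : is_metric d.

Lemma metric_ge0 x y : 0 <= d x y.
Proof. apply (proj1 Hd). Qed.

Lemma metric_refl x : d x x = 0.
Proof. apply (proj1 (proj2 Hd)); reflexivity. Qed.

Lemma metric_sym x y : d x y = d y x.
Proof. apply (proj1 (proj2 (proj2 Hd))). Qed.

Lemma metric_triangle x y z : d x z <= d x y + d y z.
Proof. apply (proj2 (proj2 (proj2 Hd))). Qed.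

Lemma metric_pos x y : x <> y -> 0 < d x y.
Proof.
  intro H. destruct (metric_ge0 x y) as [|E]; auto.
  exfalso; apply H, (proj1 (proj2 Hd)); auto.
Qed.

(* An arbitrary real when W is all of X. *)
Definition dist_compl (W : X -> Prop) (x : X) : R :=
  epsilon (inhabits 0) (is_glb (fun r => exists y, ~ W y /\ r = d x y)).

Lemma dist_compl_glb W x : (exists y, ~ W y) ->
  is_glb (fun r => exists y, ~ W y /\ r = d x y) (dist_compl W x).
Proof.
  intros [y Hy]. unfold dist_compl. apply epsilon_spec, is_glb_exists; [exists (d x y), y; auto|].
  exists 0; intros r (z & _ & ->); apply metric_ge0.
Qed.

Lemma dist_compl_le W x y : ~ W y -> dist_compl W x <= d x y.
Proof. intro Hy. apply (dist_compl_glb W x (ex_intro _ y Hy)). exists y; auto. Qed.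

Lemma dist_compl_ge W x b : (exists y, ~ W y) -> (forall y, ~ W y -> b <= d x y) ->
  b <= dist_compl W x.
Proof. intros HW Hb. apply (dist_compl_glb W x HW). intros r (y & Hy & ->); auto. Qed.

Lemma dist_compl_ge0 W x : (exists y, ~ W y) -> 0 <= dist_compl W x.
Proof. intro HW. apply dist_compl_ge; auto. intros; apply metric_ge0. Qed.

Lemma dist_compl_out W x : ~ W x -> dist_compl W x = 0.
Proof.
  intro Hx. pose proof (dist_compl_le W x x Hx). rewrite metric_refl in H.
  pose proof (dist_compl_ge0 W x (ex_intro _ x Hx)). lra.
Qed.

Lemma dist_compl_lip W x y : (exists z, ~ W z) ->
  Rabs (dist_compl W x - dist_compl W y) <= d x y.
Proof.
  intro HW.
  assert (Hone : forall x y, dist_compl W x - d x y <= dist_compl W y).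
  { clear x y. intros x y. apply dist_compl_ge; auto. intros z Hz.
    pose proof (dist_compl_le W x z Hz). pose proof (metric_triangle x y z). lra. }
  pose proof (Hone x y). pose proof (Hone y x). rewrite metric_sym in H0.
  apply Rabs_le; lra.
Qed.

Lemma dist_compl_ball W x r : (exists y, ~ W y) -> (forall y, ball d x r y -> W y) ->
  r <= dist_compl W x.
Proof.
  intros HW Hball. apply dist_compl_ge; auto. intros y Hy.
  apply Rnot_lt_le. intro Hr. apply Hy, Hball, Hr.
Qed.

Section BoundedGeometry.
Hypothesis Hbg : bounded_geometry d.

Lemma ball_enum x r (Q : X -> Prop) : 0 <= r -> (forall y, Q y -> ball d x r y) ->
  exists l, NoDup l /\ forall y, In y l <-> Q y.
Proof.
  intros Hr HQ. destruct (Hbg r Hr) as [C HC]. apply (finite_enum Q C).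
  intros l Hl HlQ. apply (HC x l Hl). intros; apply HQ, HlQ; auto.
Qed.

Lemma point_isolated x : exists e, 0 < e /\ forall y, ball d x e y -> y = x.
Proof.
  destruct (ball_enum x 1 (fun y => ball d x 1 y /\ y <> x)) as (l & _ & Hl);
    [lra|intros y Hy; apply Hy|].
  destruct (list_pos_lower_bound (d x) l) as (e & He & Hle).
  { intros y Hy. apply Hl in Hy. apply metric_pos. intro E; apply (proj2 Hy); auto. }
  exists (Rmin e 1). split; [apply Rmin_pos; lra|].
  intros y Hy. apply NNPP; intro Hne. unfold ball in Hy.
  pose proof (Rmin_l e 1). pose proof (Rmin_r e 1).
  assert (Hy' : In y l) by (apply Hl; split; auto; unfold ball; lra).
  pose proof (Hle y Hy'); lra.
Qed.

Lemma dist_compl_pos W x : (exists y, ~ W y) -> W x -> 0 < dist_compl W x.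
Proof.
  intros HW Hx. destruct (point_isolated x) as (e & He & Hiso).
  apply Rlt_le_trans with e; auto. apply dist_compl_ball; auto.
  intros y Hy; rewrite (Hiso y Hy); exact Hx.
Qed.

Lemma diameter_attained (W : X -> Prop) S y0 : (forall u v, W u -> W v -> d u v <= S) -> W y0 ->
  exists a b, W a /\ W b /\ forall u v, W u -> W v -> d u v <= d a b.
Proof.
  intros HS Hy0. assert (0 <= S) by (rewrite <- (metric_refl y0); auto).
  destruct (ball_enum y0 (S + 1) W) as (l & _ & Hl).
  { lra. }
  { intros y Hy; unfold ball; pose proof (HS y0 y Hy0 Hy); lra. }
  destruct (list_argmax (fun ab => d (fst ab) (snd ab)) (list_prod l l) (y0, y0))
    as ([a b] & Hab & Hmax); [apply in_prod; apply Hl; auto|].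
  apply in_prod_iff in Hab as [Ha Hb]. exists a, b.
  split; [apply Hl, Ha|split; [apply Hl, Hb|]].
  intros u v Hu Hv. apply (Hmax (u, v)). apply in_prod; apply Hl; auto.
Qed.

End BoundedGeometry.
End Metric.

Arguments dist_compl {X} d W x.

Section Cover.
Variables (X : Type) (d : X -> X -> R) (U : (X -> Prop) -> Prop) (m : nat) (S L p : R).
Hypothesis Hd : is_metric d.
Hypothesis Hbg : bounded_geometry d.
Hypothesis Hp : 1 <= p.
Hypothesis Hcov : is_cover U.
Hypothesis Hmult : multiplicity U m.
Hypothesis Hmesh : mesh d U S.
Hypothesis Hleb : lebesgue_number d U L.
Hypothesis HL : 0 < L.
Hypothesis Hproper : forall V, U V -> ~ (forall x, V x).

Lemma compl_nonempty W : U W -> exists y, ~ W y.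
Proof. intro H. apply not_all_ex_not, Hproper, H. Qed.

Definition members (x : X) : list (X -> Prop) :=
  epsilon (inhabits nil) (fun l => NoDup l /\ forall W, In W l <-> U W /\ W x).

Lemma members_spec x : NoDup (members x) /\ forall W, In W (members x) <-> U W /\ W x.
Proof.
  unfold members. apply epsilon_spec, (finite_enum _ m). intros l Hl HlQ.
  apply (proj1 Hmult x). split; [apply NoDup_ext_distinct; auto|exact HlQ].
Qed.

Lemma members_nodup x : NoDup (members x).
Proof. apply members_spec. Qed.

Lemma members_In x W : In W (members x) <-> U W /\ W x.
Proof. apply members_spec. Qed.

Lemma members_length x : (length (members x) <= m)%nat.
Proof. apply (proj1 Hmult x). split; [apply NoDup_ext_distinct, members_nodup|apply members_In]. Qed.

Lemma members_dist_compl_lip W x y : In W (members x) ->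
  Rabs (dist_compl d W x - dist_compl d W y) <= d x y.
Proof. intro HW. apply dist_compl_lip; auto. apply compl_nonempty, (members_In x W), HW. Qed.

Lemma members_dist_compl_inactive W x y : In W (members y) -> ~ In W (members x) ->
  dist_compl d W x = 0.
Proof.
  intros Hy Hx. apply dist_compl_out; auto. intro HWx. apply Hx, members_In.
  split; [apply (members_In y W), Hy|exact HWx].
Qed.

Lemma members_lebesgue x b : (forall W, In W (members x) -> dist_compl d W x <= b) -> L <= b.
Proof.
  intro Hb. destruct (Hcov x) as (V0 & HV0 & HV0x).
  set (E := fun r => exists V, U V /\ forall y, ball d x r y -> V y).
  assert (HE : forall r, E r -> r <= b).
  { intros r (V & HV & Hball). destruct (Rle_dec r 0) as [Hr|Hr].
    - apply Rle_trans with (dist_compl d V0 x); [|apply Hb, members_In; auto].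
      apply Rle_trans with 0; [exact Hr|apply dist_compl_ge0, compl_nonempty; auto].
    - apply Rle_trans with (dist_compl d V x); [apply dist_compl_ball; auto using compl_nonempty|].
      apply Hb, members_In. split; auto. apply Hball. unfold ball; rewrite metric_refl; auto; lra. }
  destruct (completeness E) as [v Hv]; [exists b; exact HE| |].
  { exists 0, V0. split; auto. intros y Hy. unfold ball in Hy. pose proof (metric_ge0 _ d Hd x y); lra. }
  apply Rle_trans with v; [apply (proj1 Hleb); exists x; exact Hv|apply Hv; exact HE].
Qed.

Lemma point_pair_inhabited : inhabited (X * X).
Proof. destruct Hmult as [_ (x & _)]. exact (inhabits (x, x)). Qed.

Definition diam_pair (W : X -> Prop) : X * X :=
  epsilon point_pair_inhabited (fun ab =>
    W (fst ab) /\ W (snd ab) /\ forall u v, W u -> W v -> d u v <= d (fst ab) (snd ab)).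

Definition apex (W : X -> Prop) : X := snd (diam_pair W).

Lemma mesh_bound W u v : U W -> W u -> W v -> d u v <= S.
Proof. intros; apply (proj1 Hmesh); exists W, u, v; auto. Qed.

Lemma diam_pair_spec W u : U W -> W u ->
  W (fst (diam_pair W)) /\ W (apex W) /\
  forall u v, W u -> W v -> d u v <= d (fst (diam_pair W)) (apex W).
Proof.
  intros HW Hu. unfold apex, diam_pair. apply epsilon_spec.
  destruct (diameter_attained X d Hd Hbg W S u) as (a & b & Hab); auto.
  { intros; apply (mesh_bound W); auto. }
  exists (a, b); exact Hab.
Qed.

Definition cover_embedding : X -> X -> R :=
  embedding X (X -> Prop) classical_eq_dec p (dist_compl d) apex members.

Lemma cover_unit_sphere : into_unit_sphere p cover_embedding.
Proof. apply embedding_unit_sphere with (L := L); [exact Hp|exact HL|exact members_lebesgue]. Qed.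

Lemma cover_support_size : xi_support_size d cover_embedding S.
Proof.
  split.
  - intros r (x & z & Hxz & ->). apply embedding_neq0 in Hxz as (W & HW & <-).
    apply members_In in HW as [HU Hx]. apply (mesh_bound W); auto.
    apply (diam_pair_spec W x HU Hx).
  - intros b Hb. apply (proj2 Hmesh). intros r (W & u & v & HU & Hu & Hv & ->).
    destruct (diam_pair_spec W u HU Hu) as (Ha & Hc & Hmax).
    apply Rle_trans with (d (fst (diam_pair W)) (apex W)); [apply Hmax; auto|].
    apply Hb. exists (fst (diam_pair W)), (apex W). split; [|reflexivity].
    apply embedding_apex_neq0 with (L := L); [exact Hp|exact HL|exact members_lebesgue| |].
    + apply members_In; auto.
    + apply Rgt_not_eq, dist_compl_pos; auto. apply compl_nonempty, HU.
Qed.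

(* The construction gives the constant with (2m)^(1/p), which is at most (2m^2)^(1/p). *)
Lemma cover_lipschitz : lp_lipschitz d p (2 * pw (2 * INR m ^ 2) (/ p) / L) cover_embedding.
Proof.
  apply lp_lipschitz_weaken with (2 * pw (INR (2 * m)) (/ p) / L).
  - apply metric_ge0; auto.
  - unfold Rdiv. apply Rmult_le_compat_r; [left; apply Rinv_0_lt_compat; lra|].
    apply Rmult_le_compat_l; [lra|]. apply pw_le; [left; apply Rinv_0_lt_compat; lra|apply pos_INR|].
    assert (Hm : INR m <= INR (m * m)) by (apply le_INR; nia).
    rewrite mult_INR in *. simpl. nra.
  - apply (embedding_lipschitz _ _ _ classical_eq_dec).
    + exact (metric_ge0 X d Hd).
    + exact (metric_sym X d Hd).
    + exact Hp.
    + exact HL.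
    + exact members_nodup.
    + exact members_length.
    + exact members_dist_compl_lip.
    + exact members_dist_compl_inactive.
    + exact members_lebesgue.
Qed.

End Cover.

Theorem theorem3p2p1 (X : Type) (d : X -> X -> R) (p : R)
  (U : (X -> Prop) -> Prop) (m : nat) (S L : R) :
  is_metric d -> bounded_geometry d -> 1 <= p ->
  is_cover U -> multiplicity U m -> mesh d U S -> lebesgue_number d U L -> 0 < L ->
  (forall V, U V -> ~ (forall x, V x)) ->
  exists xi : X -> X -> R,
    into_unit_sphere p xi /\ xi_support_size d xi S /\
    lp_lipschitz d p (2 * pw (2 * INR m ^ 2) (/ p) / L) xi.
Proof.
  intros Hd Hbg Hp Hcov Hmult Hmesh Hleb HL Hproper.
  exists (cover_embedding X d U m p Hmult).
  split; [|split].
  - eapply cover_unit_sphere; eauto.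
  - eapply cover_support_size; eauto.
  - eapply cover_lipschitz; eauto.
Qed.
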